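(* Let $\psi$ be a convex function $\psi:\mathbb{R}^n\to\mathbb{R}\cup\{+\infty\}$ whose domain has nonempty interior, and let $F_1,F_2:\mathbb{R}\to(0,\infty)$ be measurable with $0<I(F_1\circ\psi,\psi)<\infty$ and $0<I(F_2\circ\psi^*,\psi^* )<\infty$. Then: (a) For $h\in\Phi$, $$as_{h,F_1,F_2}^{orlicz}(\psi)\le I(F_1\circ\psi,\psi)\cdot h\Big(\frac{(\sqrt{2\pi})^n}{I(F_2\circ\psi^*,\psi^* )}\Big),$$ and if in addition $F_2\circ\psi^*$ is log-concave, $$as_{h,F_1,F_2}^{orlicz}(\psi)\le G_{h,F_1,F_2}^{orlicz}(\psi)\le I(F_1\circ\psi,\psi)\cdot h\Big(\frac{(\sqrt{2\pi})^n}{I(F_2\circ\psi^*,\psi^* )}\Big).$$ In particular, for $h\in\Phi$ and $f=e^{-\psi}$ (with $f^\circ=e^{-\psi^*}$), $$as_h^{orlicz}(f)\le G_h^{orlicz}(f)\le I(f)\cdot h\Big(\frac{(\sqrt{2\pi})^n}{I(f^\circ)}\Big).$$ (b) For $h\in\Psi$, the same inequalities hold reversed: $$as_{h,F_1,F_2}^{orlicz}(\psi)\ge I(F_1\circ\psi,\psi)\cdot h\Big(\frac{(\sqrt{2\pi})^n}{I(F_2\circ\psi^*,\psi^* )}\Big),$$ and if in addition $F_2\circ\psi^*$ is log-concave, $$as_{h,F_1,F_2}^{orlicz}(\psi)\ge G_{h,F_1,F_2}^{orlicz}(\psi)\ge I(F_1\circ\psi,\psi)\cdot h\Big(\frac{(\sqrt{2\pi})^n}{I(F_2\circ\psi^*,\psi^*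 )}\Big);$$ in particular, for $f=e^{-\psi}$, $$as_h^{orlicz}(f)\ge G_h^{orlicz}(f)\ge I(f)\cdot h\Big(\frac{(\sqrt{2\pi})^n}{I(f^\circ)}\Big).$$
   Context: $\psi^*(y)=\sup_{x\in\mathbb{R}^n}(\langle x,y\rangle-\psi(x))$ is the Legendre transform. $X_\psi=\{x:\psi(x)<\infty,\ \nabla^2\psi(x)\text{ (Alexandrov Hessian) exists and is invertible}\}$. For a function $g$ on $X_{\psi^*}$, $I(g,\psi^* )=\int_{X_{\psi^*}}g(y)\,dy$; similarly $I(F_1\circ\psi,\psi)=\int_{X_\psi}F_1(\psi(x))\,dx$, $I(f)=\int f$. $\mathcal{F}^+_{\psi^*}$ is the set of positive integrable functions $g$ on $X_{\psi^*}$ with $0<I(g,\psi^* )<\infty$, and $\mathcal{L}_{\psi^*}$ its subset of log-concave functions. $h:(0,\infty)\to(0,\infty)$ continuous; $\Phi$ is the class of $h$ that are constant or strictly convex; $\Psi$ is the class of $h$ that are constant or increasing strictly concave. The Orlicz mixed integral is $V_{h,F_1,F_2}(\psi,g)=\int_{X_\psi}h\Big(\frac{g(\nabla\psi(x))}{F_2(\langle x,\nabla\psi(x)\rangle-\psi(x))}\Big)F_1(\psi(x))\,dx$. For $h\in\Phi$: $as_{h,F_1,F_2}^{orlicz}(\psi)=\inf_{g\in\mathcal{F}^+_{\psi^*}}V_{h,F_1,F_2}\big(\psi,\frac{(\sqrt{2\pi})^n g}{I(g,\psi^* )}\big)$ and $G_{h,F_1,F_2}^{orlicz}(\psi)$ is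 the same infimum over $g\in\mathcal{L}_{\psi^*}$; for $h\in\Psi$ both are defined with $\sup$ in place of $\inf$. For $f=e^{-\psi}$, $as_h^{orlicz}(f)=as_{h,e^{-t},e^{-t}}^{orlicz}(\psi)$ and $G_h^{orlicz}(f)=G_{h,e^{-t},e^{-t}}^{orlicz}(\psi)$. Functions are assumed smooth and integrable enough for all expressions to be well defined. *)

From HB Require Import structures.
From mathcomp Require Import all_boot all_order all_algebra.
From mathcomp Require Import all_classical all_reals all_analysis.
Set Implicit Arguments. Unset Strict Implicit. Unset Printing Implicit Defensive.
Import Order.TTheory GRing.Theory Num.Theory.
Import numFieldNormedType.Exports.
Local Open Scope classical_set_scope.
Local Open Scope ring_scope.

Section Defs.
Variable R : realType.
Variable n : nat.
Local Notation V := 'rV[R]_n.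

Definition dotr (x y : V) : R := \sum_(i < n) x ord0 i * y ord0 i.

(* Iterated one-dimensional Lebesgue integrals (Tonelli): for nonnegative
   measurable f this is the integral of f w.r.t. Lebesgue measure on R^n. *)
Definition set_coord (k : nat) (t : R) (x : nat -> R) : nat -> R :=
  fun j => if j == k then t else x j.

Fixpoint iter_integral (k : nat) (f : (nat -> R) -> \bar R) (x : nat -> R)
  : \bar R :=
  match k with
  | 0 => f x
  | k'.+1 => (\int[@lebesgue_measure R]_(t in setT)
                iter_integral k' f (set_coord k' t x))%E
  end.

Definition row_of (x : nat -> R) : V := \row_(i < n) x i.

Definition lebint (f : V -> \bar R) : \bar R :=
  iter_integral n (fun x => f (row_of x)) (fun _ => 0).

Definition lebint_on (A : set V) (f : V -> \bar R) : \bar R :=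
  lebint (fun x => if x \in A then f x else 0%E).

(* Borel measurability on R^n (via n.-tuple R, product of Borel sigma-algebras) *)
Definition tuple_to_row (t : n.-tuple R) : V := \row_(i < n) tnth t i.
Definition measurable_Rn (g : V -> R) : Prop :=
  measurable_fun [set: n.-tuple R] (g \o tuple_to_row).

Definition dom (psi : V -> \bar R) : set V := [set x | (psi x < +oo)%E].

Definition convex_ext (psi : V -> \bar R) : Prop :=
  (forall x, psi x != -oo%E) /\
  forall (x y : V) (t : R), 0 < t < 1 ->
    (psi ((1 - t) *: x + t *: y)%R <= (1 - t)%:E * psi x + t%:E * psi y)%E.

Definition legendre (psi : V -> \bar R) : V -> \bar R :=
  fun y => ereal_sup [set ((dotr x y)%:E - psi x)%E | x in [set: V]].

Definition alexandrov_expansion (psi : V -> \bar R) (x g : V) (A : 'M[R]_n)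
  : Prop :=
  (psi x < +oo)%E /\ A^T = A /\
  forall eps : R, 0 < eps -> exists delta : R, 0 < delta /\
    forall h : V, dotr h h < delta ->
      exists r : R, psi (x + h)%R = r%:E /\
        `| r - (fine (psi x) + dotr g h + 2^-1 * dotr (h *m A) h) |
          <= eps * dotr h h.

Definition Xset (psi : V -> \bar R) : set V :=
  [set x | (psi x < +oo)%E /\
     exists g A, alexandrov_expansion psi x g A /\ A \in unitmx].

Definition grad (psi : V -> \bar R) (x : V) : V :=
  xget 0 [set g | exists A, alexandrov_expansion psi x g A].

Definition Iint (g : V -> R) (psi : V -> \bar R) : \bar R :=
  lebint_on (Xset psi) (fun y => (g y)%:E).

Definition IF (F : R -> R) (psi : V -> \bar R) : \bar R :=
  Iint (fun x => F (fine (psi x))) psi.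

Definition log_concave (G : V -> R) : Prop :=
  (forall x, 0 <= G x) /\
  forall (x y : V) (t : R), 0 <= t <= 1 ->
    powR (G x) (1 - t) * powR (G y) t <= G ((1 - t) *: x + t *: y).

Definition log_concave_on (A : set V) (g : V -> R) : Prop :=
  exists G, log_concave G /\ forall y, A y -> G y = g y.

Definition Fplus (psi : V -> \bar R) : set (V -> R) :=
  [set g | (forall y, 0 < g y) /\ measurable_Rn g /\
     (0 < Iint g (legendre psi))%E /\ (Iint g (legendre psi) < +oo)%E].

Definition Lclass (psi : V -> \bar R) : set (V -> R) :=
  [set g | Fplus psi g /\ log_concave_on (Xset (legendre psi)) g].

Definition Vorlicz (h F1 F2 : R -> R) (psi : V -> \bar R) (g : V -> R)
  : \bar R :=
  lebint_on (Xset psi) (fun x =>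
    (h (g (grad psi x) / F2 (dotr x (grad psi x) - fine (psi x)))
       * F1 (fine (psi x)))%:E).

Definition cst_n : R := Num.sqrt (2 * pi) ^+ n.

Definition normalize (psi : V -> \bar R) (g : V -> R) : V -> R :=
  fun y => cst_n * g y / fine (Iint g (legendre psi)).

Definition orlicz_values (h F1 F2 : R -> R) (psi : V -> \bar R)
  (C : set (V -> R)) : set (\bar R) :=
  [set Vorlicz h F1 F2 psi (normalize psi g) | g in C].

(* h in Phi: as / G defined by infima *)
Definition as_inf h F1 F2 psi := ereal_inf (orlicz_values h F1 F2 psi (Fplus psi)).
Definition G_inf  h F1 F2 psi := ereal_inf (orlicz_values h F1 F2 psi (Lclass psi)).
(* h in Psi: as / G defined by suprema *)
Definition as_sup h F1 F2 psi := ereal_sup (orlicz_values h F1 F2 psi (Fplus psi)).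
Definition G_sup  h F1 F2 psi := ereal_sup (orlicz_values h F1 F2 psi (Lclass psi)).

End Defs.

Definition hbasic {R : realType} (h : R -> R) : Prop :=
  (forall x : R, 0 < x -> 0 < h x) /\
  (forall x : R, 0 < x -> {for x, continuous h}).

Definition const_pos {R : realType} (h : R -> R) : Prop :=
  exists c : R, forall x, 0 < x -> h x = c.

Definition strictly_convex_pos {R : realType} (h : R -> R) : Prop :=
  forall x y t : R, 0 < x -> 0 < y -> x != y -> 0 < t < 1 ->
    h ((1 - t) * x + t * y) < (1 - t) * h x + t * h y.

Definition strictly_concave_pos {R : realType} (h : R -> R) : Prop :=
  forall x y t : R, 0 < x -> 0 < y -> x != y -> 0 < t < 1 ->
    (1 - t) * h x + t * h y < h ((1 - t) * x + t * y).

Definition increasing_pos {R : realType} (h : R -> R) : Prop :=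
  forall x y : R, 0 < x -> x <= y -> h x <= h y.

Definition PhiClass {R : realType} (h : R -> R) : Prop :=
  hbasic h /\ (const_pos h \/ strictly_convex_pos h).

Definition PsiClass {R : realType} (h : R -> R) : Prop :=
  hbasic h /\ (const_pos h \/ (increasing_pos h /\ strictly_concave_pos h)).

From HB Require Import structures.
From mathcomp Require Import all_boot all_order all_algebra.
From mathcomp Require Import all_classical all_reals all_analysis.
From mathcomp Require Import ring lra measurable_realfun.
Set Implicit Arguments. Unset Strict Implicit. Unset Printing Implicit Defensive.
Import Order.TTheory GRing.Theory Num.Theory.
Import numFieldNormedType.Exports.
Local Open Scope classical_set_scope.
Local Open Scope ring_scope.

(* Take g := F2 o psi^* as competitor in the infimum (resp. supremum).  At a point
   x of X_psi the Alexandrov expansion and convexity make grad psi x a subgradient,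
   so psi^*(grad psi x) = <x, grad psi x> - psi x and the quotient inside h in the
   Orlicz mixed integral is the constant (sqrt (2 pi))^n / I(F2 o psi^*, psi^* ),
   so the integral is I(F1 o psi, psi) times h of that constant.  The competitor
   is admissible: it is measurable because psi^* is lower semicontinuous, it lies in
   the log-concave class when F2 o psi^* is log-concave, and e^(-psi^* ) always is,
   psi^* being convex. *)

Section integral_scale.
Import HBNNSimple.
Context {R : realType}.
Local Open Scope ereal_scope.

(* No measurability is needed: scaling by [k] and [k^-1] exchanges the simple
   functions below [f] and those below [k * f]. *)
Lemma ge0_integralTZl_EFin d (T : measurableType d)
    (mu : {measure set T -> \bar R}) (k : R) (f : T -> \bar R) :
  (0 < k)%R -> (forall x, 0 <= f x) ->
  \int[mu]_(x in setT) (k%:E * f x) = k%:E * \int[mu]_(x in setT) f x.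
Proof.
move=> k0 f0.
have kf0 x : 0 <= k%:E * f x by rewrite mule_ge0 // lee_fin ltW.
have scale_sintegral (c : R) (c0 : (0 <= c)%R) (s : {nnsfun T >-> R}) :
    sintegral mu (scale_nnsfun s c0) = c%:E * sintegral mu s.
  by rewrite -sintegralrM.
have ki0 : (0 <= k^-1)%R by rewrite invr_ge0 ltW.
rewrite !ge0_integralTE //; apply/eqP; rewrite eq_le; apply/andP; split.
- apply: ge_ereal_sup => _ [s /= sf <-].
  have -> : sintegral mu s = k%:E * sintegral mu (scale_nnsfun s ki0).
    rewrite -(scale_sintegral _ (ltW k0)); apply: eq_sintegral => x /=.
    by rewrite mulrA mulfV ?mul1r // gt_eqF.
  rewrite lee_pmul2l ?lte_fin //; apply: ereal_sup_ubound.
  exists (scale_nnsfun s ki0) => //= x.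
  rewrite -(@lee_pmul2l _ k%:E) ?lte_fin // -EFinM mulrA mulfV ?gt_eqF // mul1r.
  exact: sf.
- rewrite -(@lee_pmul2l _ k^-1%:E) ?lte_fin ?invr_gt0 //.
  rewrite muleA -EFinM mulVf ?gt_eqF // mul1e.
  apply: ge_ereal_sup => _ [s /= sf <-].
  have -> : sintegral mu s = k^-1%:E * sintegral mu (scale_nnsfun s (ltW k0)).
    rewrite -(scale_sintegral _ ki0); apply: eq_sintegral => x /=.
    by rewrite mulrA mulVf ?mul1r // gt_eqF.
  rewrite lee_pmul2l ?lte_fin ?invr_gt0 //; apply: ereal_sup_ubound.
  by exists (scale_nnsfun s (ltW k0)) => //= x; rewrite EFinM lee_pmul2l ?lte_fin.
Qed.

Lemma iter_integral_ge0 k (f : (nat -> R) -> \bar R) x :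
  (forall y, 0 <= f y) -> 0 <= iter_integral k f x.
Proof.
move=> f0; elim: k x => [|k IH] x //=.
by apply: integral_ge0 => t _; exact: IH.
Qed.

Lemma iter_integralZl k (c : R) (f : (nat -> R) -> \bar R) x :
  (0 < c)%R -> (forall y, 0 <= f y) ->
  iter_integral k (fun y => c%:E * f y) x = c%:E * iter_integral k f x.
Proof.
move=> c0 f0; elim: k x => [|k IH] x //=.
under eq_integral => t _ do rewrite IH.
by apply: ge0_integralTZl_EFin => // t; exact: iter_integral_ge0.
Qed.

Lemma lebintZl n (c : R) (f : 'rV[R]_n -> \bar R) :
  (0 < c)%R -> (forall y, 0 <= f y) ->
  lebint (fun y => c%:E * f y) = c%:E * lebint f.
Proof. by move=> c0 f0; rewrite /lebint iter_integralZl. Qed.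

End integral_scale.

Section dot_product.
Context {R : realType} {n : nat}.
Local Notation V := 'rV[R]_n.

Lemma dotrC (x y : V) : dotr x y = dotr y x.
Proof. by apply: eq_bigr => i _; rewrite mulrC. Qed.

Lemma dotrZl t (x y : V) : dotr (t *: x) y = t * dotr x y.
Proof. by rewrite /dotr mulr_sumr; apply: eq_bigr => i _; rewrite mxE mulrA. Qed.

Lemma dotrZr t (x y : V) : dotr x (t *: y) = t * dotr x y.
Proof. by rewrite dotrC dotrZl dotrC. Qed.

Lemma dotrDr (x y z : V) : dotr x (y + z) = dotr x y + dotr x z.
Proof. by rewrite /dotr -big_split; apply: eq_bigr => i _; rewrite mxE mulrDr. Qed.

Lemma dotrBl (x y z : V) : dotr (x - y) z = dotr x z - dotr y z.
Proof. by rewrite /dotr -sumrB; apply: eq_bigr => i _; rewrite !mxE mulrBl. Qed.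

Lemma dotr_ge0 (x : V) : 0 <= dotr x x.
Proof. by apply: sumr_ge0 => i _; rewrite -expr2 sqr_ge0. Qed.

Lemma ler_dotr_dist (x y z : V) r : (forall i, `|z ord0 i - y ord0 i| <= r) ->
  `|dotr x z - dotr x y| <= (\sum_i `|x ord0 i|) * r.
Proof.
move=> zy; rewrite /dotr -sumrB mulr_suml.
apply: le_trans (ler_norm_sum _ _ _) _; apply: ler_sum => i _.
by rewrite -mulrBr normrM ler_wpM2l.
Qed.

End dot_product.

Section legendre_measurable.
Context {R : realType} {n : nat}.
Local Notation V := 'rV[R]_n.

Definition cube_open (S : set V) : Prop :=
  forall y, S y -> exists2 r : R, 0 < r &
    forall z : V, (forall i, `|z ord0 i - y ord0 i| < r) -> S z.

Definition rat_cube (p : n.-tuple rat * nat) : set (n.-tuple R) :=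
  \bigcap_(i in [set: 'I_n])
    [set t | `|tnth t i - ratr (tnth p.1 i)| < p.2.+1%:R^-1].

Lemma measurable_rat_cube p : measurable (rat_cube p).
Proof.
apply: fin_bigcap_measurable; first exact: finite_finset.
move=> i _.
rewrite (_ : [set t | _] = [set: n.-tuple R] `&`
    (fun t => tnth t i) @^-1` ball (ratr (tnth p.1 i) : R) p.2.+1%:R^-1).
  by apply: measurable_tnth => //; exact: measurable_ball.
by apply/seteqP; split => t /=; rewrite /ball /= distrC // => -[].
Qed.

Lemma rat_cube_near (t : n.-tuple R) (m : nat) :
  exists2 p, p.2 = m & rat_cube p t.
Proof.
have e0 : 0 < m.+1%:R^-1 :> R by rewrite invr_gt0.
have near_rat (i : 'I_n) : exists q : rat, `|tnth t i - ratr q| < m.+1%:R^-1.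
  have [|q] := @rat_in_itvoo R (tnth t i - m.+1%:R^-1) (tnth t i + m.+1%:R^-1).
    by rewrite ltrD2l gtrN.
  rewrite in_itv /= => /andP[q1 q2]; exists q.
  by rewrite ltr_norml; apply/andP; split; set e := m.+1%:R^-1 in q1 q2 *; lra.
have [f hf] := boolp.choice near_rat.
by exists ([tuple f i | i < n], m) => // i _ /=; rewrite tnth_mktuple.
Qed.

(* A cube-open set is the countable union of the rational cubes it contains. *)
Lemma measurable_cube_open (S : set V) : cube_open S ->
  measurable [set t : n.-tuple R | S (tuple_to_row t)].
Proof.
move=> Sopen.
pose C p := if `[< rat_cube p `<=` [set t | S (tuple_to_row t)] >]
            then rat_cube p else set0.
suff -> : [set t | S (tuple_to_row t)] = \bigcup_p C p.
  apply: countable_bigcupT_measurable; first exact: countableP.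
  by move=> p; rewrite /C; case: asboolP => _ //; exact: measurable_rat_cube.
apply/seteqP; split => t; last first.
  by move=> [p _]; rewrite /C; case: asboolP => [/[apply]|].
move=> /= St; have [r r0 Sr] := Sopen _ St.
have [m] : exists m : nat, m.+1%:R^-1 < r / 2.
  have [m] := @ltr_add_invr R 0 (r / 2) (ltac:(by rewrite divr_gt0)).
  by rewrite add0r; exists m.
set e := m.+1%:R^-1 => em.
have [p pm tp] := rat_cube_near t m.
exists p => //; rewrite /C; case: asboolP => // -[] u up /=.
apply: Sr => i; rewrite !mxE.
have := up i Logic.I; have := tp i Logic.I; rewrite /= pm -/e => ti ui.
apply: le_lt_trans (ler_distD (ratr (tnth p.1 i)) _ _) _.
by rewrite [`|_ - tnth t i|]distrC; lra.
Qed.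

(* The superlevel sets of the Legendre transform are open: it is a supremum
   of affine functions. *)
Lemma cube_open_legendre_gt (psi : V -> \bar R) (a : R) :
  cube_open [set y | (a%:E < legendre psi y)%E].
Proof.
move=> y /= /ereal_sup_gt [_ [x _ <-] ax].
have affine_le z : ((dotr x z)%:E - psi x <= legendre psi z)%E.
  by apply: ereal_sup_ubound; exists x.
move: ax; case psix : (psi x) => [c| |] ax; last 2 first.
- by move: ax; rewrite /= addeC.
- by exists 1 => // z _; rewrite (lt_le_trans _ (affine_le z)) // psix ltry.
set s := \sum_i `|x ord0 i|; set m := dotr x y - c - a.
have s0 : 0 <= s by apply: sumr_ge0.
have m0 : 0 < m by move: ax; rewrite -EFinD lte_fin /m; lra.
exists (m / (1 + s)); first by rewrite divr_gt0 // ltr_pwDl.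
move=> z zy; apply: lt_le_trans (affine_le z); rewrite psix -EFinD lte_fin.
have := ler_dotr_dist x (fun i => ltW (zy i)); rewrite ler_norml => /andP[+ _].
have : s * (m / (1 + s)) < m.
  by rewrite mulrCA gtr_pMr // ltr_pdivrMr ?mul1r; lra.
rewrite -/s; set w := m / (1 + s); rewrite /m; lra.
Qed.

Lemma measurable_legendre_comp (psi : V -> \bar R) (F : R -> R) :
  measurable_fun [set: R] F ->
  measurable_Rn (fun y => F (fine (legendre psi y))).
Proof.
move=> mF; rewrite /measurable_Rn.
rewrite (_ : _ \o _ = F \o (fine \o (legendre psi \o @tuple_to_row R n))) //.
apply: (measurableT_comp mF); apply: measurableT_comp; first exact: fine_measurable.
apply: (measurability _ (ErealGenOInfty.measurableE R)) => _ [_ [a ->] <-].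
rewrite setTI (_ : _ @^-1` _ =
    [set t | [set y | (a%:E < legendre psi y)%E] (@tuple_to_row R n t)]).
  by apply: measurable_cube_open; exact: cube_open_legendre_gt.
by apply/seteqP; split => t /=; rewrite in_itv /= andbT.
Qed.

End legendre_measurable.

Lemma exists_small_step {R : realType} (D K P delta : R) :
  0 < D -> 0 <= K -> 0 <= P -> 0 < delta ->
  exists t, [/\ 0 < t, t < 1, t ^+ 2 * P < delta & t * K < D].
Proof.
move=> D0 K0 P0 delta0.
pose t := Num.min (2^-1) (Num.min (delta / (2 * (P + 1))) (D / (2 * (K + 1)))).
have t0 : 0 < t by rewrite !lt_min !divr_gt0 ?invr_gt0 //; lra.
have : t <= t by [].
rewrite {2}/t !le_min => /and3P[t_half t_delta t_D].
rewrite ler_pdivlMr in t_delta; last lra.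
rewrite ler_pdivlMr in t_D; last lra.
by exists t; split => //; [lra | nra | nra].
Qed.

Section legendre_transform.
Context {R : realType} {n : nat}.
Local Notation V := 'rV[R]_n.
Implicit Types (psi : V -> \bar R) (x y z g : V).

Lemma convex_ext_fin psi x : convex_ext psi -> (psi x < +oo)%E ->
  exists c, psi x = c%:E.
Proof. by case=> psiNy _; move: (psiNy x); case: (psi x) => [c| |] //; exists c. Qed.

(* Convexity forces the one-sided inequality psi (x + t h) <= psi x + t (psi z - psi x),
   while the second-order expansion gives psi (x + t h) >= psi x + t <g, h> - O(t^2);
   letting t -> 0 yields psi z >= psi x + <g, z - x>. *)
Lemma alexandrov_subgradient psi x g (A : 'M[R]_n) : convex_ext psi ->
  alexandrov_expansion psi x g A ->
  forall z, ((dotr z g)%:E - psi z <= (dotr x g)%:E - psi x)%E.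
Proof.
move=> cvx [xfin [_ expansion]] z.
have [c psix] := convex_ext_fin cvx xfin.
case psiz : (psi z) => [b| |];
  [|by rewrite /= leNye|by move: (cvx.1 z); rewrite psiz].
rewrite psix -!EFinD lee_fin leNgt; apply/negP => gap.
set h := z - x; set D := (dotr z g - b) - (dotr x g - c).
set P := dotr h h; set Q := dotr (h *m A) h.
have D0 : 0 < D by rewrite subr_gt0.
have [delta [delta0 near_x]] := expansion 1 ltr01.
have [t [t0 t1 tP tK]] :=
  exists_small_step D0 (addr_ge0 (dotr_ge0 h) (normr_ge0 Q)) (dotr_ge0 h) delta0.
have [r [psixt err]] : exists r, psi (x + t *: h) = r%:E /\
    `|r - (fine (psi x) + dotr g (t *: h) + 2^-1 * dotr ((t *: h) *m A) (t *: h))|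
      <= 1 * dotr (t *: h) (t *: h).
  by apply: near_x; rewrite dotrZl dotrZr mulrA -expr2.
have upper : r <= (1 - t) * c + t * b.
  have := cvx.2 x z t ltac:(by rewrite t0 t1).
  have -> : (1 - t) *: x + t *: z = x + t *: h.
    by apply/rowP => i; rewrite !mxE; ring.
  by rewrite psixt psix psiz -!EFinM -EFinD lee_fin.
have lower : c + t * (dotr z g - dotr x g) + 2^-1 * (t * (t * Q)) - t * (t * P) <= r.
  move: err; rewrite psix /= -scalemxAl !dotrZl !dotrZr mul1r.
  rewrite dotrC dotrBl ler_norml => /andP[+ _]; rewrite -/Q -/P; lra.
have tQ : - (t * (t * `|Q|)) <= t * (t * Q).
  by rewrite -!mulrN !ler_pM2l //; exact: lerNnormlW.
have small : t * (t * (P + `|Q|)) < t * D.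
  by rewrite ltr_pM2l // -[P + _]addrC.
have tQ0 : 0 <= t * (t * `|Q|) by rewrite !mulr_ge0 // ltW.
move: upper lower tQ small tQ0; rewrite /D !(mulrDr, mulrBr).
by clear -t0; lra.
Qed.

Lemma grad_expansion psi x : Xset psi x ->
  exists A, alexandrov_expansion psi x (grad psi x) A.
Proof.
move=> [_ [g [A [gA _]]]].
by apply: (@xgetPex _ 0 [set g | exists A, alexandrov_expansion psi x g A]); exists g, A.
Qed.

Lemma legendre_grad psi x : convex_ext psi -> Xset psi x ->
  legendre psi (grad psi x) = (dotr x (grad psi x) - fine (psi x))%:E.
Proof.
move=> cvx Xx; have [A gA] := grad_expansion Xx.
have [c psix] := convex_ext_fin cvx Xx.1.
rewrite psix /=; apply/eqP; rewrite eq_le; apply/andP; split.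
- apply: ge_ereal_sup => _ [z _ <-].
  by have := alexandrov_subgradient cvx gA z; rewrite psix.
- by apply: ereal_sup_ubound; exists x => //; rewrite psix.
Qed.

Lemma legendre_gtNy psi : convex_ext psi -> interior (dom psi) !=set0 ->
  forall y, (-oo < legendre psi y)%E.
Proof.
move=> cvx [x0 /interior_subset x0fin] y.
have [c psix0] := convex_ext_fin cvx x0fin.
apply: (@lt_le_trans _ _ ((dotr x0 y)%:E - psi x0)%E).
  by rewrite psix0 -EFinD ltNyr.
by apply: ereal_sup_ubound; exists x0.
Qed.

Lemma legendre_convex psi x y (t a b : R) : convex_ext psi -> 0 <= t <= 1 ->
  legendre psi x = a%:E -> legendre psi y = b%:E ->
  (legendre psi ((1 - t) *: x + t *: y) <= ((1 - t) * a + t * b)%:E)%E.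
Proof.
move=> cvx /andP[t0 t1] psix psiy.
apply: ge_ereal_sup => _ [z _ <-].
case psiz : (psi z) => [w| |];
  [|by rewrite /= leNye|by move: (cvx.1 z); rewrite psiz].
have young u : ((dotr z u)%:E - psi z <= legendre psi u)%E.
  by apply: ereal_sup_ubound; exists z.
have := young x; have := young y.
rewrite psix psiy psiz -!EFinD !lee_fin dotrDr !dotrZr => zy zx.
have : (1 - t) * (dotr z x - w) <= (1 - t) * a by rewrite ler_wpM2l // subr_ge0.
have : t * (dotr z y - w) <= t * b by rewrite ler_wpM2l.
lra.
Qed.

Definition expN_legendre psi (y : V) : R :=
  if legendre psi y \is a fin_num then expR (- fine (legendre psi y)) else 0.

Lemma log_concave_expN_legendre psi : convex_ext psi ->
  interior (dom psi) !=set0 -> log_concave (expN_legendre psi).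
Proof.
move=> cvx domN0.
have G0 y : 0 <= expN_legendre psi y.
  by rewrite /expN_legendre; case: ifP => // _; exact: expR_ge0.
split => // x y t /andP[t0 t1].
have [->|tN0] := eqVneq t 0.
  by rewrite subr0 powRr1 // powRr0 mulr1 scale1r scale0r addr0.
have [->|tN1] := eqVneq t 1.
  by rewrite subrr powRr1 // powRr0 mul1r scale0r scale1r add0r.
rewrite /expN_legendre; case: ifPn => xfin; last first.
  by rewrite powR0 ?mul0r ?G0 // subr_eq0 eq_sym.
case: ifPn => yfin; last by rewrite powR0 ?mulr0 ?G0.
have [a psia] : exists a, legendre psi x = a%:E by exists (fine (legendre psi x)); rewrite fineK.
have [b psib] : exists b, legendre psi y = b%:E by exists (fine (legendre psi y)); rewrite fineK.
have := legendre_convex cvx (introT andP (conj t0 t1)) psia psib.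
have := legendre_gtNy cvx domN0 ((1 - t) *: x + t *: y).
case: (legendre psi _) => [m _| |] //=.
rewrite psia psib /= lee_fin -!expRM -expRD ler_expR; lra.
Qed.

End legendre_transform.

Lemma cst_n_gt0 {R : realType} (n : nat) : 0 < cst_n R n.
Proof. by rewrite exprn_gt0 // sqrtr_gt0 mulr_gt0 // pi_gt0. Qed.

Section orlicz_mixed_integral_bound.
Context {R : realType} {n : nat}.
Local Notation V := 'rV[R]_n.
Variables (psi : V -> \bar R) (F1 F2 h : R -> R).
Hypotheses (cvx : convex_ext psi) (F1_gt0 : forall t, 0 < F1 t)
  (F2_gt0 : forall t, 0 < F2 t) (mF2 : measurable_fun [set: R] F2)
  (I2_gt0 : (0 < IF F2 (legendre psi))%E) (I2_lty : (IF F2 (legendre psi) < +oo)%E)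
  (h_gt0 : forall x, 0 < x -> 0 < h x).

Local Notation F2L := (fun y => F2 (fine (legendre psi y))).
Local Notation bound :=
  (IF F1 psi * (h (cst_n R n / fine (IF F2 (legendre psi))))%:E)%E.

Lemma Fplus_legendre_comp : Fplus psi F2L.
Proof. by split; [|split; [exact: measurable_legendre_comp|]]. Qed.

(* At x in X_psi, F2L (grad psi x) is exactly the denominator F2 (<x, grad psi x> - psi x),
   so the integrand of V reduces to the constant multiple h(c) F1 (psi x). *)
Lemma Vorlicz_normalize_legendre_comp :
  Vorlicz h F1 F2 psi (normalize psi F2L) = bound.
Proof.
set I := fine (IF F2 (legendre psi)).
have I_gt0 : 0 < I by apply: fine_gt0; rewrite I2_gt0 I2_lty.
have c_gt0 : 0 < cst_n R n / I by rewrite divr_gt0 // cst_n_gt0.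
rewrite muleC /IF /Iint /lebint_on /Vorlicz /lebint_on -lebintZl; last 2 first.
- exact: h_gt0.
- by move=> y; case: ifP => _ //; rewrite lee_fin ltW.
congr lebint; apply/funext => x; case: ifP => [|_]; last by rewrite mule0.
rewrite inE => Xx; rewrite /normalize legendre_grad //= -EFinM -/I.
by rewrite mulrAC mulfK ?gt_eqF.
Qed.

Lemma bound_in_orlicz_values (C : set (V -> R)) :
  C F2L -> orlicz_values h F1 F2 psi C bound.
Proof. by move=> CF2L; exists F2L => //; exact: Vorlicz_normalize_legendre_comp. Qed.

Lemma as_inf_le_bound : (as_inf h F1 F2 psi <= bound)%E.
Proof. by apply: ereal_inf_lbound; exact: (bound_in_orlicz_values Fplus_legendre_comp). Qed.

Lemma bound_le_as_sup : (bound <= as_sup h F1 F2 psi)%E.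
Proof. by apply: ereal_sup_ubound; exact: (bound_in_orlicz_values Fplus_legendre_comp). Qed.

Hypothesis lc_F2L : log_concave_on (Xset (legendre psi)) F2L.

Lemma G_inf_le_bound : (G_inf h F1 F2 psi <= bound)%E.
Proof. by apply: ereal_inf_lbound; exact: (bound_in_orlicz_values (conj Fplus_legendre_comp lc_F2L)). Qed.

Lemma bound_le_G_sup : (bound <= G_sup h F1 F2 psi)%E.
Proof. by apply: ereal_sup_ubound; exact: (bound_in_orlicz_values (conj Fplus_legendre_comp lc_F2L)). Qed.

End orlicz_mixed_integral_bound.

Section inf_sup_comparison.
Context {R : realType} {n : nat}.
Variables (psi : 'rV[R]_n -> \bar R) (h F1 F2 : R -> R).

Lemma as_inf_le_G_inf : (as_inf h F1 F2 psi <= G_inf h F1 F2 psi)%E.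
Proof. by apply: le_ereal_inf => _ [g [Fg _] <-]; exists g. Qed.

Lemma G_sup_le_as_sup : (G_sup h F1 F2 psi <= as_sup h F1 F2 psi)%E.
Proof. by apply: ereal_sup_le => _ [g [Fg _] <-]; exists g. Qed.

End inf_sup_comparison.

Lemma log_concave_on_expN_legendre {R : realType} {n : nat} (psi : 'rV[R]_n -> \bar R) :
  convex_ext psi -> interior (dom psi) !=set0 ->
  log_concave_on (Xset (legendre psi)) (fun y => expR (- fine (legendre psi y))).
Proof.
move=> cvx domN0; exists (expN_legendre psi).
split; first exact: log_concave_expN_legendre.
move=> y [ylty _]; rewrite /expN_legendre ifT // fin_numE.
by rewrite gt_eqF ?lt_eqF ?legendre_gtNy.
Qed.

Theorem proposition2p1 (R : realType) (n : nat)
  (psi : 'rV[R]_n -> \bar R) (F1 F2 : R -> R) :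
  convex_ext psi ->
  interior (dom psi) !=set0 ->
  (forall t, 0 < F1 t) -> measurable_fun [set: R] F1 ->
  (forall t, 0 < F2 t) -> measurable_fun [set: R] F2 ->
  (0 < IF F1 psi)%E -> (IF F1 psi < +oo)%E ->
  (0 < IF F2 (legendre psi))%E -> (IF F2 (legendre psi) < +oo)%E ->
  let bound (h : R -> R) :=
    (IF F1 psi * (h (cst_n R n / fine (IF F2 (legendre psi))))%:E)%E in
  let f_bound (h : R -> R) :=
    (IF (fun t => expR (- t)) psi *
      (h (cst_n R n / fine (IF (fun t => expR (- t)) (legendre psi))))%:E)%E in
  let ef := fun t : R => expR (- t) in
  (* (a) h in Phi *)
  (forall h : R -> R, PhiClass h ->
     (as_inf h F1 F2 psi <= bound h)%E /\
     (log_concave_on (Xset (legendre psi)) (fun y => F2 (fine (legendre psi y))) ->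
        (as_inf h F1 F2 psi <= G_inf h F1 F2 psi)%E /\
        (G_inf h F1 F2 psi <= bound h)%E) /\
     ((0 < IF ef psi)%E -> (IF ef psi < +oo)%E ->
      (0 < IF ef (legendre psi))%E -> (IF ef (legendre psi) < +oo)%E ->
        (as_inf h ef ef psi <= G_inf h ef ef psi)%E /\
        (G_inf h ef ef psi <= f_bound h)%E)) /\
  (* (b) h in Psi *)
  (forall h : R -> R, PsiClass h ->
     (bound h <= as_sup h F1 F2 psi)%E /\
     (log_concave_on (Xset (legendre psi)) (fun y => F2 (fine (legendre psi y))) ->
        (G_sup h F1 F2 psi <= as_sup h F1 F2 psi)%E /\
        (bound h <= G_sup h F1 F2 psi)%E) /\
     ((0 < IF ef psi)%E -> (IF ef psi < +oo)%E ->
      (0 < IF ef (legendre psi))%E -> (IF ef (legendre psi) < +oo)%E ->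
        (G_sup h ef ef psi <= as_sup h ef ef psi)%E /\
        (f_bound h <= G_sup h ef ef psi)%E)).
Proof.
move=> cvx domN0 F1_gt0 _ F2_gt0 mF2 _ _ I2_gt0 I2_lty bound f_bound ef.
have ef_gt0 t : 0 < ef t by exact: expR_gt0.
have mef : measurable_fun [set: R] ef.
  by apply: measurableT_comp; [exact: measurable_expR | exact: oppr_measurable].
have lc_ef := log_concave_on_expN_legendre cvx domN0.
split=> h [[h_gt0 _] _]; (split; [|split]) => [|lc|_ _ J_gt0 J_lty].
- exact: as_inf_le_bound.
- by split; [exact: as_inf_le_G_inf | apply: G_inf_le_bound].
- by split; [exact: as_inf_le_G_inf | apply: G_inf_le_bound].
- exact: bound_le_as_sup.
- by split; [exact: G_sup_le_as_sup | apply: bound_le_G_sup].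
- by split; [exact: G_sup_le_as_sup | apply: bound_le_G_sup].
Qed.
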